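(* Let $\varphi(\bm x,\bm y,\bm w,\bm z)$ be an existential LRA formula, where $\bm x,\bm y$ have the same length, and let $\bm v_1,\bm v_2,\bm w_1,\bm w_2$ be fresh tuples of variables of the same length as $\bm w$. Then over $\mathbb{R}$ the formulas $\exists^{\mathsf{ram}}\bm x,\bm y\colon \exists\bm w\colon \varphi(\bm x,\bm y,\bm w,\bm z)$ and $\exists^{\mathsf{ram}}(\bm x,\bm v_1,\bm v_2),(\bm y,\bm w_1,\bm w_2)\colon \varphi(\bm x,\bm y,\bm v_1+\bm w_2,\bm z)\wedge \bm x\neq\bm y$ are equivalent.
   Context: LRA is the first-order theory of $\langle\mathbb{R};+,<,0,1\rangle$ (rational constants allowed). Ramsey quantifier: $\exists^{\mathsf{ram}}\bm x,\bm y\colon \psi(\bm x,\bm y,\bm z)$ holds for a valuation $\bm c$ of $\bm z$ iff there is an infinite sequence $(\bm a_i)_{i\ge1}$ of pairwise distinct real vectors with $\psi(\bm a_i,\bm a_j,\bm c)$ for all $i<j$. *)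

From HB Require Import structures.
From mathcomp Require Import all_boot all_order all_algebra.
From mathcomp Require Import reals.
Set Implicit Arguments. Unset Strict Implicit. Unset Printing Implicit Defensive.
Import Order.TTheory GRing.Theory Num.Theory.
Local Open Scope ring_scope.

Inductive lra_term : Type :=
  | TVar : nat -> lra_term
  | TConst : rat -> lra_term
  | TAdd : lra_term -> lra_term -> lra_term.

Inductive lra_qf : Type :=
  | QLt : lra_term -> lra_term -> lra_qf
  | QEq : lra_term -> lra_term -> lra_qf
  | QNot : lra_qf -> lra_qf
  | QAnd : lra_qf -> lra_qf -> lra_qf
  | QOr : lra_qf -> lra_qf -> lra_qf.

(* Existential formula  exists u_0 ... u_{m-1}, body : in [body] the indices
   0..m-1 are the bound variables and index m+j is free variable j. *)
Record lra_exists : Type := LraExists { ex_nvars : nat; ex_body : lra_qf }.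

Fixpoint term_eval (R : realType) (e : nat -> R) (t : lra_term) : R :=
  match t with
  | TVar i => e i
  | TConst c => ratr c
  | TAdd t1 t2 => term_eval e t1 + term_eval e t2
  end.

Fixpoint qf_holds (R : realType) (e : nat -> R) (f : lra_qf) : Prop :=
  match f with
  | QLt t1 t2 => term_eval e t1 < term_eval e t2
  | QEq t1 t2 => term_eval e t1 = term_eval e t2
  | QNot g => ~ qf_holds e g
  | QAnd g h => qf_holds e g /\ qf_holds e h
  | QOr g h => qf_holds e g \/ qf_holds e h
  end.

Definition ex_holds (R : realType) (e : nat -> R) (f : lra_exists) : Prop :=
  exists u : nat -> R,
    qf_holds (fun i => if (i < ex_nvars f)%N then u i else e (i - ex_nvars f)%N)
             (ex_body f).

(* j-th coordinate of a row vector (0 out of range). *)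
Definition vget (R : realType) (n : nat) (v : 'rV[R]_n) (j : nat) : R :=
  if @insub nat (fun k => (k < n)%N) 'I_n j is Some i then v 0 i else 0.

(* Valuation for phi(x, y, w, z): free variables 0..n-1 are x, n..2n-1 are y,
   2n..2n+p-1 are w, and 2n+p+k is z_k. *)
Definition env4 (R : realType) (n p : nat) (x y : 'rV[R]_n) (w : 'rV[R]_p)
    (z : nat -> R) : nat -> R :=
  fun j =>
    if (j < n)%N then vget x j
    else if (j < n + n)%N then vget y (j - n)
    else if (j < n + n + p)%N then vget w (j - (n + n))
    else z (j - (n + n + p))%N.

Definition ramsey (T : Type) (P : T -> T -> Prop) : Prop :=
  exists a : nat -> T, injective a /\ forall i j : nat, (i < j)%N -> P (a i) (a j).

(* Over a Ramsey sequence for the first formula, every pair (x_i, x_j) has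
   some witness w_ij; the point is that it can be taken separable, of the form
   v(x_i) + v'(x_j).  All terms of phi are linear, and eliminating the bound
   variables and w one at a time by substituting test points (the roots of
   the atoms in the eliminated variable, these roots +-1, midpoints of two
   roots, and 0) keeps every term separable in (x, y).  This yields finitely
   many separable candidates, one of which realises the same signs of all
   atoms as any given witness.  Colouring each pair of the sequence by such a
   candidate, the infinite Ramsey theorem gives a subsequence on which one
   candidate (v, v') works for all pairs; the triples (x_i, v(x_i), v'(x_i))
   form the second Ramsey sequence.  The converse just forgets the extra
   components. *)

From mathcomp Require Import all_boot all_order all_algebra.
From mathcomp Require Import reals ring lra.
From Stdlib Require Import ClassicalEpsilon.
From Stdlib Require List.
Set Implicit Arguments. Unset Strict Implicit. Unset Printing Implicit Defensive.
Import Order.TTheory GRing.Theory Num.Theory.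
Local Open Scope ring_scope.

Section InfiniteRamsey.
Local Open Scope nat_scope.

Definition infinite (S : nat -> Prop) := forall m, exists2 j, m <= j & S j.

Lemma infinite_pigeonhole K (c : nat -> nat) (S : nat -> Prop) :
  infinite S -> (forall j, S j -> c j < K) ->
  exists2 k, k < K & infinite (fun j => S j /\ c j = k).
Proof.
elim: K S => [|K IH] S infS cK; first by have [j _ /cK] := infS 0.
have [infK|finK] := classic (infinite (fun j => S j /\ c j = K)); first by exists K.
have [m mK] : exists m, forall j, m <= j -> S j -> c j <> K.
  apply: NNPP => unbounded; apply: finK => m; apply: NNPP => none.
  apply: unbounded; exists m => j mj Sj cjK; apply: none; by exists j.
pose S' j := S j /\ m <= j.
have infS' : infinite S'.
  move=> m'; have [j jm Sj] := infS (maxn m m').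
  by exists j; last split=> //; apply: leq_trans jm; rewrite ?leq_maxl ?leq_maxr.
have cK' j : S' j -> c j < K.
  move=> [Sj mj]; have := cK j Sj; rewrite ltnS leq_eqVlt => /orP[/eqP|] //.
  by move/(mK j mj Sj).
have [k kK infk] := IH S' infS' cK'.
exists k; first exact: leqW.
by move=> m'; have [j jm' [[Sj _] cj]] := infk m'; exists j.
Qed.

Lemma infinite_enum (S : nat -> Prop) :
  infinite S -> exists e : nat -> nat, (forall i, S (e i)) /\ {homo e : i j / i < j}.
Proof.
move=> infS; pose next m := epsilon (inhabits 0) (fun j => m <= j /\ S j).
have nextP m : m <= next m /\ S (next m).
  have [j mj Sj] := infS m.
  exact: (epsilon_spec _ (fun j => m <= j /\ S j) (ex_intro _ j (conj mj Sj))).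
exists (fun i => iter i (fun j => next j.+1) (next 0)); split.
  by case=> [|i]; apply: (nextP _).2.
by apply: homo_ltn; [exact: ltn_trans | move=> i; exact: (nextP _).1].
Qed.

Section Pairs.
Variables (K : nat) (col : nat -> nat -> nat).
Hypothesis col_lt : forall i j, i < j -> col i j < K.

(* A stage of the construction: all later pivots are drawn from the pool. *)
Record stage := Stage { pivot : nat; pool : nat -> Prop }.

Definition admissible st := infinite (pool st) /\ forall j, pool st j -> pivot st < j.

Definition stage_colour st := epsilon (inhabits 0)
  (fun k => k < K /\ infinite (fun j => pool st j /\ col (pivot st) j = k)).

Definition coloured_pool st j := pool st j /\ col (pivot st) j = stage_colour st.

Definition next_stage st :=
  let a := epsilon (inhabits 0) (coloured_pool st) in
  Stage a (fun j => coloured_pool st j /\ a < j).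

Lemma next_stageP st : admissible st ->
  [/\ stage_colour st < K, coloured_pool st (pivot (next_stage st))
    & admissible (next_stage st)].
Proof.
move=> [infS S_gt].
have [colK infC] : stage_colour st < K /\
    infinite (fun j => pool st j /\ col (pivot st) j = stage_colour st).
  have [k kK infk] := infinite_pigeonhole infS (fun j Sj => col_lt (S_gt j Sj)).
  exact: (epsilon_spec _ (fun k => k < K /\ infinite _) (ex_intro _ k (conj kK infk))).
have Cnext : coloured_pool st (pivot (next_stage st)).
  have [j _ Cj] := infC 0.
  exact: (epsilon_spec _ (coloured_pool st) (ex_intro _ j Cj)).
split=> //; split=> [m|j []//].
have [j jm Cj] := infC (maxn m (pivot (next_stage st)).+1).
by exists j; last split=> //; apply: leq_trans jm; rewrite ?leq_maxl ?leq_maxr.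
Qed.

Definition stage_at k := iter k next_stage (Stage 0 (fun j => 0 < j)).

Lemma admissible_stage_at k : admissible (stage_at k).
Proof.
elim: k => [|k IH]; first by split=> // m; exists m.+1.
by have [] := next_stageP IH.
Qed.

Lemma pool_stage_at k l j : k < l -> pool (stage_at l) j -> coloured_pool (stage_at k) j.
Proof.
elim: l => // l IH; rewrite ltnS leq_eqVlt => /orP[/eqP-> []//|kl [[Sj _] _]].
exact: IH.
Qed.

Lemma pivot_stage_at k l : k < l ->
  coloured_pool (stage_at k) (pivot (stage_at l)).
Proof.
case: l => // l; rewrite ltnS leq_eqVlt => /orP[/eqP->|kl].
  by have [] := next_stageP (admissible_stage_at l).
have [_ [Sl _] _] := next_stageP (admissible_stage_at l).
exact: pool_stage_at kl Sl.
Qed.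

Theorem ramsey_pairs : exists (b : nat -> nat) (c : nat),
  {homo b : i j / i < j} /\ forall i j, i < j -> col (b i) (b j) = c.
Proof.
pose colour k := stage_colour (stage_at k).
have [c _ infc] := @infinite_pigeonhole K colour (fun _ => True)
  (fun m => ex_intro2 _ _ m (leqnn m) I)
  (fun k _ => let: And3 colK _ _ := next_stageP (admissible_stage_at k) in colK).
have [e [ec e_inc]] := infinite_enum infc.
exists (fun i => pivot (stage_at (e i))), c; split=> i j ij.
  have [_ S_gt] := admissible_stage_at (e i).
  by apply: S_gt; case: (pivot_stage_at (e_inc _ _ ij)).
by have [_ ->] := pivot_stage_at (e_inc _ _ ij); case: (ec i).
Qed.

End Pairs.
End InfiniteRamsey.

Lemma ramsey_map T U (P : T -> T -> Prop) (Q : U -> U -> Prop) (f : T -> U) :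
  (forall x y, x <> y -> P x y -> f x <> f y /\ Q (f x) (f y)) -> ramsey P -> ramsey Q.
Proof.
move=> PQ [a [a_inj aP]].
have fa i j : (i < j)%N -> f (a i) <> f (a j) /\ Q (f (a i)) (f (a j)).
  by move=> ij; apply: PQ (aP i j ij) => /a_inj eij; move: ij; rewrite eij ltnn.
exists (f \o a); split=> [i j /= faij|i j /fa[]//].
case: (ltngtP i j) => // [ij|ji]; [case: (fa i j ij) | case: (fa j i ji)] => + _.
  by move/(_ faij).
by move/(_ (esym faij)).
Qed.

Lemma ramsey_finite_cover T C (cs : list C) (Q : C -> T -> T -> Prop) :
  ramsey (fun x y => exists2 c, List.In c cs & Q c x y) ->
  exists2 c, List.In c cs & ramsey (Q c).
Proof.
move=> [a [a_inj aQ]]; have [c0 _ _] := aQ 0%N 1%N isT.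
pose col i j := epsilon (inhabits 0%N)
  (fun k => (k < length cs)%N /\ Q (List.nth k cs c0) (a i) (a j)).
have colP i j : (i < j)%N ->
    (col i j < length cs)%N /\ Q (List.nth (col i j) cs c0) (a i) (a j).
  move=> ij; have [c /(List.In_nth _ _ c0)[k [/ssrnat.ltP k_cs <-]] Qc] := aQ i j ij.
  exact: (epsilon_spec _ (fun k => _ /\ _) (ex_intro _ k (conj k_cs Qc))).
have [b [k [b_inc bk]]] := ramsey_pairs (fun i j ij => (colP i j ij).1).
exists (List.nth k cs c0).
  apply/List.nth_In/ssrnat.ltP; rewrite -(bk 0%N 1%N isT).
  exact: (colP _ _ (b_inc 0%N 1%N isT)).1.
exists (a \o b); split=> [|i j ij]; first exact/inj_comp/incn_inj/leq_mono.
by rewrite /= -(bk i j ij); exact: (colP _ _ (b_inc _ _ ij)).2.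
Qed.

Section TestPoints.
Variables (T : Type) (zero : T) (inc dec : T -> T) (mid : T -> T -> T).

Definition test_points (rs : list T) : list T :=
  (zero :: rs ++ List.map inc rs ++ List.map dec rs
     ++ List.flat_map (fun r => List.map (mid r) rs) rs)%list.

Variable rs : list T.

Lemma test_points_root r : List.In r rs -> List.In r (test_points rs).
Proof. by move=> r_rs; right; apply/List.in_app_iff; left. Qed.

Lemma test_points_inc r : List.In r rs -> List.In (inc r) (test_points rs).
Proof.
move=> r_rs; right; rewrite !List.in_app_iff; right; left; exact: List.in_map.
Qed.

Lemma test_points_dec r : List.In r rs -> List.In (dec r) (test_points rs).
Proof.
move=> r_rs; right; rewrite !List.in_app_iff; right; right; left; exact: List.in_map.
Qed.

Lemma test_points_mid r r' : List.In r rs -> List.In r' rs ->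
  List.In (mid r r') (test_points rs).
Proof.
move=> r_rs r'_rs; right; rewrite !List.in_app_iff; right; right; right.
by apply/List.in_flat_map; exists r; split=> //; exact: List.in_map.
Qed.

End TestPoints.

Lemma test_points_map T U (zero : T) (inc dec : T -> T) (mid : T -> T -> T) (rs : list T)
    (e : T -> U) (inc' dec' : U -> U) (mid' : U -> U -> U) :
  (forall r, e (inc r) = inc' (e r)) -> (forall r, e (dec r) = dec' (e r)) ->
  (forall r r', e (mid r r') = mid' (e r) (e r')) ->
  List.map e (test_points zero inc dec mid rs) =
    test_points (e zero) inc' dec' mid' (List.map e rs).
Proof.
move=> e_inc e_dec e_mid; rewrite /test_points /= !List.map_app !List.map_map.
rewrite (List.map_ext _ _ e_inc) (List.map_ext _ _ e_dec).
rewrite !List.flat_map_concat_map List.concat_map !List.map_map.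
do 4 f_equal; congr List.concat; apply: List.map_ext => r.
by rewrite !List.map_map; apply: List.map_ext.
Qed.

Lemma list_extremum T (le : rel T) (s : list T) r0 :
  total le -> transitive le -> List.In r0 s ->
  exists2 m, List.In m s & forall r, List.In r s -> le r m.
Proof.
move=> le_total le_tr; case: s => // a s _.
have le_refl r : le r r by have := le_total r r; rewrite orbb.
elim: s a => [|b s IH] a; first by exists a => [|r [<-|[]]]; [left|].
have [m ms mmax] := IH b.
case/orP: (le_total a m) => [am|ma]; first by exists m => [|r [<-|/mmax]] //; right.
by exists a => [|r [<-|/mmax rm]] //; [left|exact: le_tr ma].
Qed.

Section RealTestPoints.
Variable R : realType.

Definition real_test_points : list R -> list R :=
  test_points 0 (fun r => r + 1) (fun r => r - 1) (fun r r' => 2^-1 * (r + r')).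

Lemma sgr_subr_same_side (c t r : R) :
  (r < c /\ r < t) \/ (c < r /\ t < r) -> Num.sg (c - r) = Num.sg (t - r).
Proof.
case=> -[cr tr]; [rewrite !gtr0_sg | rewrite !ltr0_sg]; rewrite ?subr_gt0 ?subr_lt0 //.
Qed.

Lemma real_test_pointsP (rs : list R) (t : R) :
  exists2 c, List.In c (real_test_points rs) &
    forall r, List.In r rs -> Num.sg (c - r) = Num.sg (t - r).
Proof.
have [t_rs|t_rs] := classic (List.In t rs); first by exists t => //; exact: test_points_root.
pose below := List.filter (< t) rs; pose above := List.filter (> t) rs.
have side r : List.In r rs -> (List.In r below /\ r < t) \/ (List.In r above /\ t < r).
  move=> r_rs; rewrite !List.filter_In.
  by case: (ltgtP r t) => [rt|tr|rt]; [left|right|move: r_rs; rewrite rt].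
have [[b b_below]|no_below] := classic (exists r, List.In r below);
have [[a a_above]|no_above] := classic (exists r, List.In r above).
- have [lo /List.filter_In[lo_rs /= lot] lo_max] := list_extremum le_total le_trans b_below.
  have [hi /List.filter_In[hi_rs /= thi] hi_min] := list_extremum (le := >=%R)
    (fun x y => le_total y x) (fun y x z xy yz => le_trans yz xy) a_above.
  exists (2^-1 * (lo + hi)); first exact: (@test_points_mid _ _ _ _ (fun r r' => 2^-1 * (r + r'))).
  move=> r /side[[/lo_max rlo rt]|[/hi_min /= hir tr]]; apply: sgr_subr_same_side.
    by left; split=> //; lra.
  by right; split=> //; lra.
- have [lo /List.filter_In[lo_rs /= lot] lo_max] := list_extremum le_total le_trans b_below.
  exists (lo + 1); first exact: (@test_points_inc _ _ (fun r => r + 1)).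
  move=> r /side[[/lo_max rlo rt]|[r_above _]]; last by case: no_above; exists r.
  by apply: sgr_subr_same_side; left; split=> //; lra.
- have [hi /List.filter_In[hi_rs /= thi] hi_min] := list_extremum (le := >=%R)
    (fun x y => le_total y x) (fun y x z xy yz => le_trans yz xy) a_above.
  exists (hi - 1); first exact: (@test_points_dec _ _ _ (fun r => r - 1)).
  move=> r /side[[r_below _]|[/hi_min /= hir tr]]; first by case: no_below; exists r.
  by apply: sgr_subr_same_side; right; split=> //; lra.
- exists 0; first by left.
  by move=> r /side[[r_below _]|[r_above _]]; [case: no_below|case: no_above]; exists r.
Qed.

End RealTestPoints.

Section SeparableElimination.
Variables (R : realType) (X Y : Type).

Record sepform := SepForm { coef : nat -> R; lpart : X -> R; rpart : Y -> R }.

Definition sf_eval N (f : sepform) (V : nat -> R) x y :=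
  \sum_(k < N) coef f k * V k + lpart f x + rpart f y.

Definition sf_add f g := SepForm (fun k => coef f k + coef g k)
  (fun x => lpart f x + lpart g x) (fun y => rpart f y + rpart g y).
Definition sf_scale a f :=
  SepForm (fun k => a * coef f k) (fun x => a * lpart f x) (fun y => a * rpart f y).
Definition sf_const a := SepForm (fun _ => 0) (fun _ => a) (fun _ => 0).
Definition sf_var i := SepForm (fun k => (k == i)%:R) (fun _ => 0) (fun _ => 0).

Lemma eq_sf_eval N f V V' x y : (forall k, (k < N)%N -> V k = V' k) ->
  sf_eval N f V x y = sf_eval N f V' x y.
Proof. by move=> VV'; rewrite /sf_eval; congr (_ + _ + _); apply: eq_bigr => k _; rewrite VV'. Qed.

Lemma sf_evalD N f g V x y : sf_eval N (sf_add f g) V x y = sf_eval N f V x y + sf_eval N g V x y.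
Proof.
rewrite /sf_eval /= (eq_bigr (fun k : 'I_N => coef f k * V k + coef g k * V k)).
  by rewrite big_split /=; ring.
by move=> k _; rewrite mulrDl.
Qed.

Lemma sf_evalZ N a f V x y : sf_eval N (sf_scale a f) V x y = a * sf_eval N f V x y.
Proof.
rewrite /sf_eval /= (eq_bigr (fun k : 'I_N => a * (coef f k * V k))).
  by rewrite -mulr_sumr; ring.
by move=> k _; rewrite mulrA.
Qed.

Lemma sf_eval_coef0 N g h V x y : sf_eval N (SepForm (fun _ => 0) g h) V x y = g x + h y.
Proof. by rewrite /sf_eval big1 ?add0r // => k _; rewrite mul0r. Qed.

Lemma sf_evalC N a V x y : sf_eval N (sf_const a) V x y = a.
Proof. by rewrite sf_eval_coef0 addr0. Qed.

Lemma sf_eval_var N i V x y : (i < N)%N -> sf_eval N (sf_var i) V x y = V i.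
Proof.
move=> iN; rewrite /sf_eval /= !addr0 (bigD1 (Ordinal iN)) //= eqxx mul1r big1 ?addr0 //.
by move=> k; rewrite -val_eqE => /negbTE /= ->; rewrite mul0r.
Qed.

Lemma sf_eval_recr N f V x y : sf_eval N.+1 f V x y = sf_eval N f V x y + coef f N * V N.
Proof. by rewrite /sf_eval big_ord_recr /=; ring. Qed.

Lemma sf_eval_set N f V t x y : sf_eval N f [eta V with N |-> t] x y = sf_eval N f V x y.
Proof. by apply: eq_sf_eval => k kN /=; rewrite ltn_eqF. Qed.

Definition sf_subst N c f := sf_add f (sf_scale (coef f N) c).

Lemma sf_eval_subst N c f V x y :
  sf_eval N (sf_subst N c f) V x y = sf_eval N.+1 f [eta V with N |-> sf_eval N c V x y] x y.
Proof. by rewrite sf_eval_recr sf_eval_set /= eqxx sf_evalD sf_evalZ. Qed.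

Definition sf_root N f := sf_scale (- (coef f N)^-1) f.

Lemma sf_eval_root N f V x y : coef f N != 0 ->
  sf_eval N.+1 f V x y = coef f N * (V N - sf_eval N (sf_root N f) V x y).
Proof.
by move=> fN0; rewrite sf_eval_recr sf_evalZ mulrBr mulrA mulrN mulfV // mulN1r opprK addrC.
Qed.

Definition sf_test_points N L :=
  test_points (sf_const 0) (fun f => sf_add f (sf_const 1)) (fun f => sf_add f (sf_const (-1)))
    (fun f g => sf_scale 2^-1 (sf_add f g))
    (List.map (sf_root N) (List.filter (fun f => coef f N != 0) L)).

Lemma sf_test_pointsP N L V x y : exists2 c, List.In c (sf_test_points N L) &
  forall f, List.In f L ->
    Num.sg (sf_eval N.+1 f [eta V with N |-> sf_eval N c V x y] x y) =
      Num.sg (sf_eval N.+1 f V x y).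
Proof.
pose e f := sf_eval N f V x y.
have [c0 c0_tp c0_sg] := real_test_pointsP
  (List.map e (List.map (sf_root N) (List.filter (fun f => coef f N != 0) L))) (V N).
have /List.in_map_iff[c [ec c_tp]] : List.In c0 (List.map e (sf_test_points N L)).
  rewrite /sf_test_points (@test_points_map _ _ _ _ _ _ _ e (fun r => r + 1) (fun r => r - 1)
    (fun r r' => 2^-1 * (r + r'))) /e ?sf_evalC // => *; by rewrite ?(sf_evalD, sf_evalZ, sf_evalC).
subst c0; exists c => // f fL; have [fN0|fN0] := eqVneq (coef f N) 0.
  by rewrite !sf_eval_recr fN0 !mul0r sf_eval_set.
rewrite !(sf_eval_root _ _ _ fN0) sf_eval_set /= eqxx !sgrM; congr (_ * _).
apply: c0_sg; apply/List.in_map_iff; exists (sf_root N f); split=> //.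
by apply/List.in_map_iff; exists f; split=> //; apply/List.filter_In.
Qed.

Definition spoint := ((X -> nat -> R) * (Y -> nat -> R))%type.

Definition sp_eval (s : spoint) x y k := s.1 x k + s.2 y k.

(* The value of a separable form at a separable point splits again into an
   [x]-part and a [y]-part: this is why separability survives elimination. *)
Definition sp_extend N (c : sepform) (s : spoint) : spoint :=
  (fun x k => if k == N then \sum_(i < N) coef c i * s.1 x i + lpart c x else s.1 x k,
   fun y k => if k == N then \sum_(i < N) coef c i * s.2 y i + rpart c y else s.2 y k).

Lemma sp_eval_extend N c s x y :
  sp_eval (sp_extend N c s) x y =1 [eta sp_eval s x y with N |-> sf_eval N c (sp_eval s x y) x y].
Proof.
move=> k; rewrite /sp_eval /=; case: (k == N) => //.
rewrite /sf_eval /sp_eval; under [in RHS]eq_bigr => i _ do rewrite mulrDr.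
by rewrite big_split /=; ring.
Qed.

Fixpoint sp_elim N (L : list sepform) : list spoint :=
  if N is N'.+1 then
    List.flat_map (fun c => List.map (sp_extend N' c) (sp_elim N' (List.map (sf_subst N' c) L)))
      (sf_test_points N' L)
  else [:: ((fun _ _ => 0), (fun _ _ => 0))].

Lemma sp_elimP N L V x y : exists2 s, List.In s (sp_elim N L) &
  forall f, List.In f L -> Num.sg (sf_eval N f (sp_eval s x y) x y) = Num.sg (sf_eval N f V x y).
Proof.
elim: N L V => [|N IH] L V.
  by exists ((fun _ _ => 0), (fun _ _ => 0)) => [|f _]; [left|congr Num.sg; exact: eq_sf_eval].
have [c c_tp c_sg] := sf_test_pointsP N L V x y.
have [s s_elim s_sg] := IH (List.map (sf_subst N c) L) V.
exists (sp_extend N c s) => [|f fL].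
  by apply/List.in_flat_map; exists c; split=> //; exact: List.in_map.
rewrite (eq_sf_eval _ _ _ (fun k _ => sp_eval_extend N c s x y k)) -sf_eval_subst.
by rewrite s_sg ?sf_eval_subst ?c_sg //; exact: List.in_map.
Qed.

End SeparableElimination.

Lemma vget_ord (R : realType) q (v : 'rV[R]_q) (j : 'I_q) : vget v j = v 0 j.
Proof. by rewrite /vget valK. Qed.

Lemma vget_row (R : realType) q (F : nat -> R) k : (k < q)%N -> vget (\row_(j < q) F j) k = F k.
Proof. by move=> kq; rewrite -[k]/(nat_of_ord (Ordinal kq)) vget_ord mxE. Qed.

Fixpoint qf_atoms (f : lra_qf) : list (lra_term * lra_term) :=
  match f with
  | QLt a b | QEq a b => [:: (a, b)]
  | QNot g => qf_atoms g
  | QAnd g h | QOr g h => (qf_atoms g ++ qf_atoms h)%list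
  end.

Lemma sgr_subr_cmp (R : realType) (u v u' v' : R) : Num.sg (u - v) = Num.sg (u' - v') ->
  (u < v <-> u' < v') /\ (u = v <-> u' = v').
Proof.
move=> sgE; split; first by rewrite -subr_lt0 -sgr_lt0 sgE sgr_lt0 subr_lt0.
have sg0 a b : (a == b) = (Num.sg (a - b) == 0) by rewrite sgr_eq0 subr_eq0.
by split=> /eqP; rewrite sg0; [rewrite sgE|rewrite -sgE]; rewrite -sg0 => /eqP.
Qed.

Lemma qf_holds_sgr (R : realType) (E E' : nat -> R) f :
  (forall a b, List.In (a, b) (qf_atoms f) ->
     Num.sg (term_eval E a - term_eval E b) = Num.sg (term_eval E' a - term_eval E' b)) ->
  qf_holds E f <-> qf_holds E' f.
Proof.
elim: f => [a b|a b|g IH|g IHg h IHh|g IHg h IHh] /= sgE;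
  try by have [] := sgr_subr_cmp (sgE a b (or_introl erefl)).
  by have := IH sgE; tauto.
all: have := IHg (fun a b ab => sgE a b (List.in_or_app _ _ _ (or_introl ab))).
all: have := IHh (fun a b ab => sgE a b (List.in_or_app _ _ _ (or_intror ab))).
all: tauto.
Qed.

Lemma eq_term_eval (R : realType) (E E' : nat -> R) t : E =1 E' -> term_eval E t = term_eval E' t.
Proof. by move=> EE'; elim: t => [i|c|a IHa b IHb] /=; rewrite ?EE' ?IHa ?IHb. Qed.

Lemma qf_holds_ext (R : realType) (E E' : nat -> R) f : E =1 E' -> qf_holds E f -> qf_holds E' f.
Proof. by move=> EE'; apply: (qf_holds_sgr _).1 => a b _; rewrite !(eq_term_eval _ EE'). Qed.

Section SeparableWitnesses.
Variables (R : realType) (n p : nat) (phi : lra_exists) (z : nat -> R).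
Local Notation X := 'rV[R]_n.
Local Notation m := (ex_nvars phi).

Definition row_of (V : nat -> R) : 'rV[R]_p := \row_(j < p) V (m + j)%N.

(* Variables [0, m) of [V] are the existential variables of [phi], and
   [m, m + p) are the coordinates of [w]. *)
Definition body_env (V : nat -> R) (x y : X) : nat -> R :=
  fun i => if (i < m)%N then V i else env4 x y (row_of V) z (i - m).

Fixpoint term_form (t : lra_term) : sepform R X X :=
  match t with
  | TVar i =>
    if (i < m)%N then @sf_var R X X i else
    let j := (i - m)%N in
    if (j < n)%N then SepForm (fun _ => 0) (fun x : X => vget x j) (fun _ => 0)
    else if (j < n + n)%N then SepForm (fun _ => 0) (fun _ => 0) (fun y : X => vget y (j - n)%N)
    else if (j < n + n + p)%N then @sf_var R X X (m + (j - (n + n)))%N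
    else @sf_const R X X (z (j - (n + n + p))%N)
  | TConst c => @sf_const R X X (ratr c)
  | TAdd a b => sf_add (term_form a) (term_form b)
  end.

Lemma term_formE t V x y : term_eval (body_env V x y) t = sf_eval (m + p) (term_form t) V x y.
Proof.
elim: t => [i|c|a IHa b IHb] /=; rewrite ?sf_evalD ?IHa ?IHb ?sf_evalC //.
rewrite /body_env; case: ifP => im; first by rewrite sf_eval_var ?ltn_addr.
rewrite /env4; case: ifP => i1; first by rewrite sf_eval_coef0 addr0.
case: ifP => i2; first by rewrite sf_eval_coef0 add0r.
case: ifP => i3; last by rewrite sf_evalC.
have ip : (i - m - (n + n) < p)%N by rewrite ltn_subLR // leqNgt i2.
by rewrite sf_eval_var ?ltn_add2l // /row_of (@vget_row _ _ (fun j => V (m + j)%N)).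
Qed.

Definition atom_forms : list (sepform R X X) :=
  List.map (fun ab => sf_add (term_form ab.1) (sf_scale (-1) (term_form ab.2)))
    (qf_atoms (ex_body phi)).

Definition witness_points := sp_elim (m + p) atom_forms.

Definition witnesses (s : spoint R X X) x y :=
  qf_holds (body_env (sp_eval s x y) x y) (ex_body phi).

Lemma witnesses_of_ex_holds x y : (exists w : 'rV[R]_p, ex_holds (env4 x y w z) phi) ->
  exists2 s, List.In s witness_points & witnesses s x y.
Proof.
move=> [w [u holds]].
pose V k := if (k < m)%N then u k else vget w (k - m).
have holdsV : qf_holds (body_env V x y) (ex_body phi).
  apply: qf_holds_ext holds => i; rewrite /body_env /V.
  case: ifP => // _; congr (env4 _ _ _ _ _); apply/rowP => j.
  by rewrite mxE ltnNge leq_addr /= addKn vget_ord.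
have [s s_elim s_sg] := sp_elimP (m + p) atom_forms V x y.
exists s => //; apply/(qf_holds_sgr (E' := body_env V x y)) => // a b ab.
by have := s_sg _ (List.in_map _ _ (a, b) ab); rewrite !sf_evalD !sf_evalZ !mulN1r -!term_formE.
Qed.

Lemma ex_holds_of_witnesses s x y : witnesses s x y ->
  ex_holds (env4 x y (row_of (s.1 x) + row_of (s.2 y)) z) phi.
Proof.
move=> wit; exists (sp_eval s x y); apply: qf_holds_ext wit.
move=> i; rewrite /body_env; case: ifP => // _; congr (env4 _ _ _ _ _).
by apply/rowP => j; rewrite !mxE.
Qed.

End SeparableWitnesses.

Theorem mainTheorem5 (R : realType) (n p : nat) (phi : lra_exists) (z : nat -> R) :
  ramsey (fun x y : 'rV[R]_n => exists w : 'rV[R]_p, ex_holds (env4 x y w z) phi)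
  <->
  ramsey (fun (A B : 'rV[R]_n * 'rV[R]_p * 'rV[R]_p) =>
            ex_holds (env4 A.1.1 B.1.1 (A.1.2 + B.2) z) phi /\ A.1.1 <> B.1.1).
Proof.
split=> [P_ram|Q_ram]; last first.
  apply: (ramsey_map (f := fun A => A.1.1)) Q_ram => A B _ [holds AB].
  by split=> //; exists (A.1.2 + B.2).
have [s _ wit_ram] : exists2 s, List.In s (witness_points n p phi z) & ramsey (witnesses p phi z s).
  apply: ramsey_finite_cover; apply: (@ramsey_map _ _ _ _ id) P_ram => x y xy.
  by move/witnesses_of_ex_holds.
pose f x := (x, row_of p phi (s.1 x), row_of p phi (s.2 x)).
apply: (ramsey_map (f := f)) wit_ram => x y xy /ex_holds_of_witnesses holds.
by split=> [[]|].
Qed.
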